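(* For $\mathsf t=(t_0:t_1)\in\mathbb P^1$ let $\mathcal X_{\mathsf t}\subset\mathbb P^4$ be defined by $s_1(x)=t_0s_4(x)+t_1s_2(x)^2=0$. Then $\mathcal X_{\mathsf t}$ is singular exactly for the five values $\mathsf t_1=(4:-1)$, $\mathsf t_2=(2:-1)$, $\mathsf t_3=(30:-7)$, $\mathsf t_4=(20:-13)$, $\mathsf t_5=(0:1)$. For $\nu=1,\dots,4$ all singularities of $\mathcal X_{\mathsf t_\nu}$ are of type $A_1$, their numbers are $15,10,10,5$ respectively, $\mathfrak A_5$ acts transitively on them, and one singular point is $(1:-1:1:-1:0)$, $(1:-1:0:0:0)$, $(2:2:2:-3:-3)$, $(1:1:1:1:-4)$ respectively; $\mathcal X_{\mathsf t_5}$ is a double quadric (the quadric $s_1=s_2=0$ counted twice). Moreover, the singular locus of the total space $\mathcal X=\{(x,\mathsf t)\in\mathbb P^4\times\mathbb P^1: x\in\mathcal X_{\mathsf t}\}$ is $\{\mathsf t=(0:1),\ s_1=s_2=s_4=0\}$.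
   Context: $(x_1:\dots:x_5)$ are homogeneous coordinates on $\mathbb P^4$ and $s_k=x_1^k+\dots+x_5^k$ is the $k$-th power sum. $\mathfrak S_5$ acts by permuting coordinates. Each $\mathcal X_{\mathsf t}$ is a quartic surface in the hyperplane $\{s_1=0\}\cong\mathbb P^3$. *)

From HB Require Import structures.
From mathcomp Require Import all_boot all_order all_algebra all_fingroup all_solvable.
Set Implicit Arguments. Unset Strict Implicit. Unset Printing Implicit Defensive.
Import GRing.Theory Num.Theory.
Local Open Scope ring_scope.

(* Points of the affine cone over P^4 are vectors 'I_5 -> R. *)
Definition psum (R : comNzRingType) (k : nat) (x : 'I_5 -> R) : R :=
  \sum_(i < 5) x i ^+ k.

(* The bihomogeneous form G(x,t) = t0 s4(x) + t1 s2(x)^2, defined over any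
   commutative ring (so it can be evaluated on polynomials). *)
Definition Gform (R : comNzRingType) (x : 'I_5 -> R) (t : R * R) : R :=
  t.1 * psum 4 x + t.2 * psum 2 x ^+ 2.

(* Restriction of G to the line (x + X v, t + X u): a univariate polynomial
   whose coefficients are the Taylor coefficients of G at (x,t) in the
   direction (v,u). *)
Definition Gline (C : fieldType) (x v : 'I_5 -> C) (t u : C * C) : {poly C} :=
  Gform (fun i => (x i)%:P + (v i)%:P * 'X) ((t.1)%:P + (u.1)%:P * 'X, (t.2)%:P + (u.2)%:P * 'X).

Definition nonzero5 (C : fieldType) (x : 'I_5 -> C) : Prop := exists i, x i != 0.

Definition proportional (C : fieldType) (x y : 'I_5 -> C) : Prop :=
  exists c : C, c != 0 /\ forall i, y i = c * x i.

(* t and (a:b) define the same point of P^1 (t assumed nonzero) *)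
Definition same_P1 (C : fieldType) (t : C * C) (a b : C) : Prop :=
  t.1 * b = t.2 * a.

(* x is a singular point of the surface X_t = {s1 = 0, G(.,t) = 0} viewed as a
   quartic hypersurface in the hyperplane {s1 = 0} = P^3: the differential of
   G(.,t) at x vanishes on all directions inside the hyperplane. *)
Definition sing_pt (C : fieldType) (t : C * C) (x : 'I_5 -> C) : Prop :=
  nonzero5 x /\ psum 1 x = 0 /\ Gform x t = 0 /\
  forall v : 'I_5 -> C, psum 1 v = 0 -> (Gline x v t (0, 0))`_1 = 0.

(* Quadratic part (half Hessian) of G(.,t) at x, and its polar bilinear form. *)
Definition hessq (C : fieldType) (t : C * C) (x v : 'I_5 -> C) : C :=
  (Gline x v t (0, 0))`_2.
Definition hessb (C : fieldType) (t : C * C) (x v w : 'I_5 -> C) : C :=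
  hessq t x (fun i => v i + w i) - hessq t x v - hessq t x w.

(* Singularity of type A_1 (ordinary double point): x is singular and the
   Hessian of the equation restricted to the hyperplane {s1 = 0} has rank 3,
   i.e. its radical (on the 4-dim space {s1=0}) is exactly the line of x. *)
Definition A1_pt (C : fieldType) (t : C * C) (x : 'I_5 -> C) : Prop :=
  sing_pt t x /\
  forall w : 'I_5 -> C, psum 1 w = 0 ->
    (forall v : 'I_5 -> C, psum 1 v = 0 -> hessb t x v w = 0) ->
    exists c : C, forall i, w i = c * x i.

(* Singular point (x,t) of the total space X in P^4 x P^1 (complete
   intersection s1 = G = 0): the differential of G at (x,t) vanishes on the
   kernel of the differential of s1 (Jacobian criterion). *)
Definition total_sing_pt (C : fieldType) (x : 'I_5 -> C) (t : C * C) : Prop :=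
  nonzero5 x /\ t != (0, 0) /\ psum 1 x = 0 /\ Gform x t = 0 /\
  forall (v : 'I_5 -> C) (u : C * C), psum 1 v = 0 -> (Gline x v t u)`_1 = 0.

Definition vec5 (C : fieldType) (a b c d e : C) : 'I_5 -> C :=
  fun i => nth 0 [:: a; b; c; d; e] i.

Definition nodal_config (C : fieldType) (t : C * C) (n : nat) (p : 'I_5 -> C) : Prop :=
  (exists P : 'I_n -> 'I_5 -> C,
     (forall k, sing_pt t (P k)) /\
     (forall k l, proportional (P k) (P l) -> k = l) /\
     (forall x, sing_pt t x -> exists k, proportional (P k) x)) /\
  (forall x, sing_pt t x -> A1_pt t x) /\
  (forall x y, sing_pt t x -> sing_pt t y ->
     exists s : {perm 'I_5}, s \in ('Alt_('I_5))%g /\ proportional (fun i => x (s i)) y) /\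
  sing_pt t p.

(* Write G(x, t) = t_0 s_4(x) + t_1 s_2(x)^2.
   - Calculus: the Taylor coefficients of G along a line give its gradient
     [grad] and Hessian [hess]; by Lagrange multipliers x is singular on X_t
     iff grad t x is a constant vector ([sing_ptE]).  Singularity and the A_1
     condition are invariant under scaling and permuting the coordinates.
   - Shape of singular points: for t_0 <> 0 the coordinates of a singular
     point are roots of a cubic without X^2 term, hence take the values
     r1, r2, -r1-r2 along a word over {0,1,2}; with s_1 = 0 this makes x
     proportional to an explicit integer vector, the [pattern] of the word
     ([sing_pt_pattern]).
   - Finite computation: for the 243 patterns, the parameters t making them
     singular are decided over Z by evaluation and transported to C by the
     injective ring morphism Z -> C.  This gives the five singular parameters
     ([sing_pt_params]) and, for the four nodal ones, certificates that the
     singular points form one Alt_5-orbit of the announced size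
     ([nodal_config_of_certificate]); explicit linear combinations show that
     the Hessian at each of them has a one-dimensional radical
     ([A1_of_certificate]).
   - The double quadric t = (0:1) and the total space are treated directly. *)

From HB Require Import structures.
From mathcomp Require Import all_boot all_order all_algebra all_fingroup all_solvable.
From Stdlib Require Import BinInt FunctionalExtensionality.
From mathcomp Require Import ring ssrZ.
Import GRing.Theory Num.Theory.
Local Open Scope ring_scope.
Set Implicit Arguments. Unset Strict Implicit. Unset Printing Implicit Defensive.

Notation o0 := (@Ordinal 5 0 isT).
Notation o1 := (@Ordinal 5 1 isT).
Notation o2 := (@Ordinal 5 2 isT).
Notation o3 := (@Ordinal 5 3 isT).
Notation o4 := (@Ordinal 5 4 isT).

(* The five coordinates as an explicit list: unlike the library enumeration
   of 'I_5, it reduces under vm_compute. *)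
Definition ords5 : seq 'I_5 := [:: o0; o1; o2; o3; o4].

Lemma ord5P (P : 'I_5 -> Prop) : P o0 -> P o1 -> P o2 -> P o3 -> P o4 -> forall i, P i.
Proof.
by move=> P0 P1 P2 P3 P4 [[|[|[|[|[|//]]]]] lt_i5];
  rewrite (bool_irrelevance lt_i5 isT).
Qed.

Lemma mem_ords5 i : i \in ords5.
Proof. by move: i; apply: ord5P. Qed.

Lemma nth_ords5 (i : 'I_5) : nth o0 ords5 i = i.
Proof. by move: i; apply: ord5P. Qed.

(* Sums over the coordinates, written out so that they compute. *)
Definition sum5 (V : nmodType) (F : 'I_5 -> V) : V := F o0 + F o1 + F o2 + F o3 + F o4.

Lemma big_ord5 (V : nmodType) (F : 'I_5 -> V) : \sum_(i < 5) F i = sum5 F.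
Proof.
rewrite !big_ord_recl big_ord0 addr0 !addrA /sum5.
by congr (_ + _ + _ + _ + _); congr F; apply: val_inj.
Qed.

Lemma psum5 (R : comNzRingType) k (x : 'I_5 -> R) : psum k x = sum5 (fun i => x i ^+ k).
Proof. exact: big_ord5. Qed.

Definition dot (R : comNzRingType) (v w : 'I_5 -> R) : R := sum5 (fun i => v i * w i).
Definition norm2 (R : comNzRingType) (x : 'I_5 -> R) : R := sum5 (fun i => x i ^+ 2).

Lemma psum2E (R : comNzRingType) (x : 'I_5 -> R) : psum 2 x = norm2 x.
Proof. exact: psum5. Qed.

(* grad t x = (1/4) (dG/dx_i)_i and hess t x w = D^2G(x) w, for G = G(., t). *)
Definition grad (R : comNzRingType) (t : R * R) (x : 'I_5 -> R) (i : 'I_5) : R :=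
  t.1 * x i ^+ 3 + t.2 * norm2 x * x i.
Definition hess (R : comNzRingType) (t : R * R) (x w : 'I_5 -> R) (i : 'I_5) : R :=
  12 * t.1 * x i ^+ 2 * w i + 4 * t.2 * norm2 x * w i + 8 * t.2 * x i * dot x w.

Definition constant5 (T : Type) (h : 'I_5 -> T) : Prop := forall i j, h i = h j.

Lemma Gform_Euler (R : comNzRingType) (x : 'I_5 -> R) t : Gform x t = dot x (grad t x).
Proof. by case: t => a b; rewrite /Gform /dot /grad /norm2 !psum5 /sum5 /=; ring. Qed.

Section Taylor.
Variable C : fieldType.
Implicit Types (x v w : 'I_5 -> C) (t u : C * C).

Lemma coef1M (p q : {poly C}) : (p * q)`_1 = p`_0 * q`_1 + p`_1 * q`_0.
Proof. by rewrite coefM !big_ord_recl big_ord0 addr0. Qed.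

Lemma coef2M (p q : {poly C}) : (p * q)`_2 = p`_0 * q`_2 + p`_1 * q`_1 + p`_2 * q`_0.
Proof. by rewrite coefM !big_ord_recl big_ord0 addr0 addrA. Qed.

Lemma line_coef (a b : C) n :
  (a%:P + b%:P * 'X)`_n = if n == 0%nat then a else if n == 1%nat then b else 0.
Proof. by rewrite coefD coefC coefCM coefX; case: n => [|[|n]]; rewrite ?mulr0 ?mulr1 ?addr0 ?add0r. Qed.

Lemma expr4 (p : {poly C}) : p ^+ 4 = p ^+ 2 * p ^+ 2.
Proof. by rewrite -exprD. Qed.

Ltac taylor := rewrite /Gline /Gform !psum5 /sum5 /= ?expr4 ?expr2;
  rewrite !(line_coef, coef0M, coef1M, coef2M, coefD) /=.

Lemma Gline_coef1 x v t u :
  (Gline x v t u)`_1 = 4 * dot v (grad t x) + u.1 * psum 4 x + u.2 * psum 2 x ^+ 2.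
Proof. by taylor; rewrite /dot /grad /norm2 /sum5; ring. Qed.

Lemma Gline_coef2 x v t : (Gline x v t (0, 0))`_2 =
  6 * t.1 * dot (fun i => x i ^+ 2) (fun i => v i ^+ 2) +
  t.2 * (2 * norm2 x * norm2 v + 4 * dot x v ^+ 2).
Proof. by taylor; rewrite /dot /norm2 /sum5; ring. Qed.

Lemma hessbE t x v w : hessb t x v w = dot v (hess t x w).
Proof. by rewrite /hessb /hessq !Gline_coef2 /hess /dot /norm2 /sum5 /=; ring. Qed.

End Taylor.

Section Lagrange.
Variable C : numFieldType.
Implicit Types (x v w h : 'I_5 -> C) (t : C * C).

Lemma orth_hyperplaneP h : (forall v, psum 1 v = 0 -> dot v h = 0) <-> constant5 h.
Proof.
split=> [orth_h | const_h v s1v].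
- suff h_o0 : forall i, h i = h o0 by move=> i j; rewrite !h_o0.
  have step v i : psum 1 v = 0 -> dot v h = h i - h o0 -> h i = h o0.
    by move=> /orth_h -> /esym/eqP; rewrite subr_eq0 => /eqP.
  apply: ord5P => //; [apply: (step (vec5 (-1) 1 0 0 0)) |
    apply: (step (vec5 (-1) 0 1 0 0)) | apply: (step (vec5 (-1) 0 0 1 0)) |
    apply: (step (vec5 (-1) 0 0 0 1))]; rewrite ?psum5 /dot /sum5 /vec5 /=; ring.
- have -> : dot v h = psum 1 v * h o0 by rewrite psum5 /dot /sum5 !(const_h _ o0); ring.
  by rewrite s1v mul0r.
Qed.

(* Lagrange multipliers: x is a singular point of X_t iff the gradient of
   G(., t) at x is a multiple of the gradient (1, ..., 1) of s_1. *)
Lemma sing_ptE t x :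
  sing_pt t x <-> [/\ nonzero5 x, psum 1 x = 0 & constant5 (grad t x)].
Proof.
have coef1E v : (Gline x v t (0, 0))`_1 = 4 * dot v (grad t x).
  by rewrite Gline_coef1 /= !mul0r !addr0.
split=> [[nz_x [s1x [_ crit_x]]] | [nz_x s1x const_x]].
- split=> //; apply/orth_hyperplaneP => v s1v.
  by move: (crit_x v s1v); rewrite coef1E => /eqP; rewrite mulf_eq0 pnatr_eq0 /= => /eqP.
- have orth_x := proj2 (orth_hyperplaneP _) const_x.
  split=> //; split=> //; split; first by rewrite Gform_Euler orth_x.
  by move=> v s1v; rewrite coef1E orth_x ?mulr0.
Qed.

End Lagrange.

Section Symmetries.
Variable C : numFieldType.
Implicit Types (x y z v w : 'I_5 -> C) (t : C * C).

Lemma proportional_sym x y : proportional x y -> proportional y x.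
Proof.
case=> c [c0 Dy]; exists c^-1; split; first by rewrite invr_eq0.
by move=> i; rewrite Dy mulrA mulVf // mul1r.
Qed.

Lemma proportional_trans x y z : proportional x y -> proportional y z -> proportional x z.
Proof.
case=> c [c0 Dy] [d [d0 Dz]]; exists (d * c); split; first by rewrite mulf_neq0.
by move=> i; rewrite Dz Dy mulrA.
Qed.

Lemma proportionalE x y : proportional x y -> exists2 c, c != 0 & y = (fun i => c * x i).
Proof. by case=> c [c0 Dy]; exists c => //; apply: functional_extensionality. Qed.

Lemma grad_scale c t x i : grad t (fun j => c * x j) i = c ^+ 3 * grad t x i.
Proof. by case: t => a b; rewrite /grad /norm2 /sum5 /=; ring. Qed.

Lemma hess_scale c t x w i : hess t (fun j => c * x j) w i = c ^+ 2 * hess t x w i.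
Proof. by case: t => a b; rewrite /hess /dot /norm2 /sum5 /=; ring. Qed.

Lemma sing_pt_proportional t x y : sing_pt t x -> proportional x y -> sing_pt t y.
Proof.
move=> /sing_ptE [[i xi0] s1x const_x] /proportionalE [c c0 ->].
apply/sing_ptE; split.
- by exists i; rewrite mulf_neq0.
- have -> : psum 1 (fun j => c * x j) = c * psum 1 x by rewrite !psum5 /sum5; ring.
  by rewrite s1x mulr0.
- by move=> i1 i2; rewrite !grad_scale (const_x i1 i2).
Qed.

Lemma hessb_scale c t x v w : hessb t (fun j => c * x j) v w = c ^+ 2 * hessb t x v w.
Proof. by rewrite !hessbE /dot /sum5 !hess_scale; ring. Qed.

Lemma A1_pt_proportional t x y : A1_pt t x -> proportional x y -> A1_pt t y.
Proof.
move=> [sing_x radical_x] xy; split; first exact: sing_pt_proportional xy.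
move: xy => /proportionalE [c c0 ->] w s1w Hw.
have [d Dw] : exists d, forall i, w i = d * x i.
  apply: radical_x => // v s1v; move: (Hw v s1v); rewrite hessb_scale => /eqP.
  by rewrite mulf_eq0 expf_eq0 (negbTE c0) /= => /eqP.
by exists (d / c) => i; rewrite Dw mulrA divfK.
Qed.

Lemma sum5_perm (V : nmodType) (F : 'I_5 -> V) (s : {perm 'I_5}) :
  sum5 (fun i => F (s i)) = sum5 F.
Proof. by rewrite -!big_ord5 [RHS](reindex_inj (@perm_inj _ s)). Qed.

Lemma proportional_perm x y (s : {perm 'I_5}) :
  proportional x y -> proportional (fun i => x (s i)) (fun i => y (s i)).
Proof. by case=> c [c0 Dy]; exists c; split=> // i; rewrite Dy. Qed.

Lemma psum_perm k x (s : {perm 'I_5}) : psum k (fun i => x (s i)) = psum k x.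
Proof. by rewrite !psum5; exact: (sum5_perm (fun j => x j ^+ k)). Qed.

Lemma dot_perm v w (s : {perm 'I_5}) : dot (fun i => v (s i)) (fun i => w (s i)) = dot v w.
Proof. exact: (sum5_perm (fun j => v j * w j)). Qed.

Lemma grad_perm t x (s : {perm 'I_5}) i : grad t (fun j => x (s j)) i = grad t x (s i).
Proof. by rewrite /grad /norm2 (sum5_perm (fun j => x j ^+ 2)). Qed.

Lemma hess_perm t x w (s : {perm 'I_5}) i :
  hess t (fun j => x (s j)) (fun j => w (s j)) i = hess t x w (s i).
Proof. by rewrite /hess /norm2 (sum5_perm (fun j => x j ^+ 2)) dot_perm. Qed.

Lemma hessb_perm t x v w (s : {perm 'I_5}) :
  hessb t (fun i => x (s i)) (fun i => v (s i)) (fun i => w (s i)) = hessb t x v w.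
Proof. by rewrite !hessbE -(dot_perm v _ s) /dot /sum5 !hess_perm. Qed.

Lemma sing_pt_perm t x (s : {perm 'I_5}) : sing_pt t x -> sing_pt t (fun i => x (s i)).
Proof.
move=> /sing_ptE [[i xi0] s1x const_x]; apply/sing_ptE; split.
- by exists (s^-1 i)%g; rewrite permKV.
- by rewrite psum_perm.
- by move=> i1 i2; rewrite !grad_perm (const_x (s i1) (s i2)).
Qed.

Lemma A1_pt_perm t x (s : {perm 'I_5}) : A1_pt t x -> A1_pt t (fun i => x (s i)).
Proof.
move=> [sing_x radical_x]; split; first exact: sing_pt_perm.
move=> w s1w Hw; pose w' i := w ((s^-1)%g i).
have Dw : w = (fun i => w' (s i)) by apply: functional_extensionality => i; rewrite /w' permK.
have [c Dw'] : exists c, forall i, w' i = c * x i.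
  apply: radical_x => [|v s1v]; first by rewrite -(psum_perm 1 w' s) -Dw.
  have s1vs : psum 1 (fun i => v (s i)) = 0 by rewrite psum_perm.
  by move: (Hw _ s1vs); rewrite Dw hessb_perm.
by exists c => i; rewrite -Dw' /w' permK.
Qed.

End Symmetries.

Section PlaneLinearAlgebra.
Variable C : numFieldType.

Lemma kernel_line (d1 d2 r1 r2 : C) :
  d1 * r1 + d2 * r2 = 0 -> (d1 != 0) || (d2 != 0) -> exists r, r1 = r * d2 /\ r2 = - (r * d1).
Proof.
move=> /eqP; rewrite addr_eq0 => /eqP form0 nz.
have [d2_0 | d2_0] := eqVneq d2 0; last first.
  exists (r1 / d2); split; first by field.
  apply: (mulfI d2_0); transitivity (- (d1 * r1)); first by rewrite form0 opprK.
  by field.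
move: form0 nz; rewrite d2_0 mul0r oppr0 eqxx orbF => /eqP form0 d1_0.
move: form0; rewrite mulf_eq0 (negbTE d1_0) /= => /eqP ->.
by exists (- r2 / d1); split; [rewrite mulr0 | field].
Qed.

Lemma orth_common (a b A B al be : C) :
  a * al + b * be = 0 -> A * al + B * be = 0 -> (al != 0) || (be != 0) -> a * B = b * A.
Proof.
rewrite ![_ * al]mulrC ![_ * be]mulrC => ab_orth AB_orth nz.
have [r [-> ->]] := kernel_line ab_orth nz.
have [r' [-> ->]] := kernel_line AB_orth nz.
ring.
Qed.

End PlaneLinearAlgebra.

Definition zC (R : nzRingType) (z : Z) : R := (int_of_Z z)%:~R.

Fact zC_is_zmod_morphism (R : nzRingType) : zmod_morphism (@zC R).
Proof. by move=> a b; rewrite /zC !raddfB. Qed.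
Fact zC_is_monoid_morphism (R : nzRingType) : monoid_morphism (@zC R).
Proof. by split=> [|a b]; rewrite /zC ?rmorphM ?rmorph1. Qed.
HB.instance Definition _ (R : nzRingType) :=
  GRing.isZmodMorphism.Build Z R (@zC R) (@zC_is_zmod_morphism R).
HB.instance Definition _ (R : nzRingType) :=
  GRing.isMonoidMorphism.Build Z R (@zC R) (@zC_is_monoid_morphism R).

Definition zvec (R : nzRingType) (z : 'I_5 -> Z) : 'I_5 -> R := fun i => zC R (z i).

Lemma grad_zvec (R : comNzRingType) (T : Z * Z) z i :
  grad (zC R T.1, zC R T.2) (zvec R z) i = zC R (grad T z i).
Proof. by rewrite /grad /norm2 /sum5 /zvec /= !(rmorphD, rmorphXn, rmorphM). Qed.

Definition zsing (T : Z * Z) (z : 'I_5 -> Z) : bool :=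
  all (fun i => grad T z i == grad T z o0) ords5.
Definition znonzero (z : 'I_5 -> Z) : bool := has (fun i => z i != 0) ords5.
Definition zprop (y z : 'I_5 -> Z) : bool :=
  all (fun i => all (fun j => y i * z j == y j * z i) ords5) ords5.

Definition zsing_point (T : Z * Z) (p : 'I_5 -> Z) : bool :=
  [&& znonzero p, sum5 p == 0 & zsing T p].

Section Transport.
Variable C : numFieldType.
Implicit Types (x : 'I_5 -> C) (y z : 'I_5 -> Z).

Lemma zC_inj : injective (zC C).
Proof. by move=> a b /intr_inj /(can_inj int_of_ZK). Qed.

Lemma zC_eq0 a : (zC C a == 0) = (a == 0).
Proof. by rewrite -(rmorph0 (zC C)) (inj_eq zC_inj). Qed.

Lemma znonzeroP z : nonzero5 (zvec C z) <-> znonzero z.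
Proof.
split=> [[i zi0] | /hasP [i _ zi0]]; last by exists i; rewrite zC_eq0.
by apply/hasP; exists i; rewrite ?mem_ords5 // -zC_eq0.
Qed.

Lemma zsingP T z : constant5 (grad (zC C T.1, zC C T.2) (zvec C z)) <-> zsing T z.
Proof.
split=> [const_z | /allP sing_z i j].
- by apply/allP => i _; apply/eqP/zC_inj; rewrite -!grad_zvec (const_z i o0).
- by rewrite !grad_zvec (eqP (sing_z i (mem_ords5 i))) (eqP (sing_z j (mem_ords5 j))).
Qed.

Lemma zprop_proportional y z :
  nonzero5 (zvec C y) -> nonzero5 (zvec C z) -> zprop y z -> proportional (zvec C y) (zvec C z).
Proof.
move=> [i0 yi0] [j0 zj0] /allP cross.
have crossC i j : zvec C y i * zvec C z j = zvec C y j * zvec C z i.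
  have /allP/(_ j (mem_ords5 j))/eqP crossZ := cross i (mem_ords5 i).
  by rewrite /zvec -!rmorphM crossZ.
exists (zvec C z i0 / zvec C y i0); split.
- apply: mulf_neq0; last by rewrite invr_eq0.
  apply: contraNneq zj0 => zi0; move/eqP: (crossC i0 j0).
  by rewrite zi0 mulr0 mulf_eq0 (negbTE yi0).
- by move=> j; apply: (mulfI yi0); rewrite (crossC i0 j); field.
Qed.

Lemma proportional_zprop y z : proportional (zvec C y) (zvec C z) -> zprop y z.
Proof.
case=> c [_ Dz]; apply/allP => i _; apply/allP => j _; apply/eqP/zC_inj.
by move: Dz; rewrite /zvec => Dz; rewrite !rmorphM /= !Dz; ring.
Qed.

Lemma zsing_pointP T p : zsing_point T p -> sing_pt (zC C T.1, zC C T.2) (zvec C p).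
Proof.
case/and3P => /znonzeroP nz_p /eqP s1_p /zsingP sing_p; apply/sing_ptE; split=> //.
transitivity (zC C (sum5 p)); last by rewrite s1_p rmorph0.
by rewrite psum5 /sum5 !rmorphD /= !expr1.
Qed.

End Transport.

(* Words of length 5 over {0, 1, 2}: the letter k of a word stands for the
   value r1, r2 or -r1-r2, written in the basis (r1, r2) as [letter k]. *)
Definition letter (k : nat) : Z * Z :=
  match k with 0 => (1, 0)%Z | 1 => (0, 1)%Z | _ => (-1, -1)%Z end.
Definition letters (s : seq nat) (i : 'I_5) : Z * Z := letter (nth 0%nat s i).
Definition weight (s : seq nat) : Z * Z :=
  (sum5 (fun i => (letters s i).1), sum5 (fun i => (letters s i).2)).

(* The integer vector that is, up to scaling, the only point with s_1 = 0
   whose coordinates follow the word s. *)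
Definition pattern (s : seq nat) (i : 'I_5) : Z :=
  (letters s i).1 * (weight s).2 - (letters s i).2 * (weight s).1.

Fixpoint words (n : nat) : seq (seq nat) :=
  if n is n'.+1 then [seq k :: s | k <- iota 0 3, s <- words n'] else [:: [::]].

Lemma mem_words (s : seq nat) : all (fun k : nat => (k < 3)%nat) s -> s \in words (size s).
Proof.
elim: s => [|k s IHs] // /andP [k_lt3 s_lt3].
by apply: (allpairs_f (fun k s => k :: s)); [rewrite mem_iota | exact: IHs].
Qed.

(* No word of length 5 uses its three letters equally often. *)
Lemma weight_neq0 : all (fun s => weight s != (0, 0)%Z) (words 5).
Proof. by vm_compute. Qed.

Section Patterns.
Variable C : numClosedFieldType.
Implicit Types (x : 'I_5 -> C).

(* For t_0 != 0, the coordinates of a critical point of G(., t) on {s_1 = 0}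
   are roots of one cubic t_0 X^3 + t_1 s_2(x) X - c without X^2 term: they
   take at most three values, of sum zero. *)
Lemma three_values (a b : C) x : a != 0 -> constant5 (grad (a, b) x) ->
  exists r1 r2, forall i, [\/ x i = r1, x i = r2 | x i = - r1 - r2].
Proof.
move=> a0 const_x; set q := b * norm2 x / a.
have [r r_root] : exists r, r ^+ 2 = - (x o0 ^+ 2 + q) - x o0 * r.
  have [r Dr] := @solve_monicpoly C 2 (fun k => if k is 0 then - (x o0 ^+ 2 + q) else - x o0) isT.
  by exists r; rewrite Dr !big_ord_recl big_ord0 /= expr0 expr1 mulr1 addr0 mulNr.
exists (x o0), r => i.
have factor : grad (a, b) x i - grad (a, b) x o0 =
    a * (x i - x o0) * (x i - r) * (x i - (- x o0 - r)) +
    a * (x i - x o0) * (r ^+ 2 - (- (x o0 ^+ 2 + q) - x o0 * r)).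
  by rewrite /grad /q /=; field.
move: factor; rewrite r_root (const_x i o0) !subrr mulr0 addr0 => /esym/eqP.
rewrite !mulf_eq0 (negbTE a0) !subr_eq0 /= -!orbA.
by case/or3P => /eqP ->; [exact: Or31 | exact: Or32 | exact: Or33].
Qed.

Lemma zC_letter r1 r2 k :
  zC C (letter k).1 * r1 + zC C (letter k).2 * r2 = if k is 0 then r1 else if k is 1 then r2 else - r1 - r2.
Proof. by case: k => [|[|k]] /=; ring. Qed.

Lemma sing_pt_pattern (a b : C) x : a != 0 -> sing_pt (a, b) x ->
  exists2 s, s \in words 5 & proportional (zvec C (pattern s)) x.
Proof.
move=> a0 /sing_ptE [nz_x s1x const_x].
have [r1 [r2 x_vals]] := three_values a0 const_x.
pose k i := (if x i == r1 then 0 else if x i == r2 then 1 else 2)%nat.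
pose s := [seq k i | i <- ords5].
have Dx i : x i = zC C (letters s i).1 * r1 + zC C (letters s i).2 * r2.
  rewrite /letters /s (nth_map o0) // nth_ords5 zC_letter /k.
  case: ifP => [/eqP // | /eqP ne1]; case: ifP => [/eqP // | /eqP ne2].
  by case: (x_vals i) => [/ne1 | /ne2 |].
have s_word : s \in words 5.
  by apply: (mem_words (s := s)); apply/allP => _ /mapP [i _ ->]; rewrite /k; case: ifP => _ //; case: ifP.
exists s => //.
have weight_s : (zC C (weight s).1 != 0) || (zC C (weight s).2 != 0).
  move/allP: weight_neq0 => /(_ s s_word).
  by case: (weight s) => w1 w2; rewrite !zC_eq0 xpair_eqE negb_and.
have s1_weight : zC C (weight s).1 * r1 + zC C (weight s).2 * r2 = 0.
  by rewrite -s1x psum5 /sum5 !expr1 !Dx /weight /= !rmorphD; ring.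
have [r [Dr1 Dr2]] := kernel_line s1_weight weight_s.
have Dx_pattern i : x i = r * zvec C (pattern s) i.
  by rewrite Dx Dr1 Dr2 /zvec /pattern rmorphB !rmorphM; ring.
exists r; split=> //; apply/eqP => r0.
by case: nz_x => i; rewrite Dx_pattern r0 mul0r eqxx.
Qed.
End Patterns.

(* Row i of the linear system in t = (t_0, t_1) saying that the integer
   vector z is a critical point of G(., t) on {s_1 = 0}. *)
Definition crit_row (z : 'I_5 -> Z) (i : 'I_5) : Z * Z :=
  (grad (1, 0) z i - grad (1, 0) z o0, grad (0, 1) z i - grad (0, 1) z o0).
Definition det2 (u v : Z * Z) : Z := u.1 * v.2 - u.2 * v.1.

Definition targets : seq (Z * Z) := [:: (4, -1); (2, -1); (30, -7); (20, -13); (0, 1)]%Z.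

(* Either z = 0, or the system has rank 2 (z is never critical), or it has
   rank 1 and its kernel contains one of the targets. *)
Definition crit_params_ok (z : 'I_5 -> Z) : bool :=
  [|| ~~ znonzero z,
      has (fun i => has (fun j => det2 (crit_row z i) (crit_row z j) != 0) ords5) ords5
    | has (fun i => crit_row z i != (0, 0)) ords5 && has (fun T => zsing T z) targets].

Lemma patterns_crit_params : all (fun s => crit_params_ok (pattern s)) (words 5).
Proof. by vm_compute. Qed.

Section SingularFibres.
Variable C : numClosedFieldType.
Implicit Types (x : 'I_5 -> C) (t : C * C).

Lemma crit_rowE (a b : C) z i :
  grad (a, b) (zvec C z) i - grad (a, b) (zvec C z) o0 =
  a * zC C (crit_row z i).1 + b * zC C (crit_row z i).2.
Proof.
rewrite /crit_row /= !rmorphB /= -!(grad_zvec C (1, 0)) -!(grad_zvec C (0, 1)) /= rmorph1 rmorph0.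
by rewrite /grad /norm2 /sum5 /=; ring.
Qed.

Lemma sing_pt_params (a b : C) x : a != 0 -> sing_pt (a, b) x ->
  exists2 T, T \in targets & a * zC C T.2 = b * zC C T.1.
Proof.
move=> a0 sing_x; have [s s_word xs] := sing_pt_pattern a0 sing_x.
have sing_z := sing_pt_proportional sing_x (proportional_sym xs).
have /sing_ptE [_ _ const_z] := sing_z.
have row_orth i : a * zC C (crit_row (pattern s) i).1 + b * zC C (crit_row (pattern s) i).2 = 0.
  by rewrite -crit_rowE (const_z i o0) subrr.
have ab_nz : (a != 0) || (b != 0) by rewrite a0.
have /znonzeroP nz_z : nonzero5 (zvec C (pattern s)) by case/sing_ptE: sing_z.
have := allP patterns_crit_params s s_word; rewrite /crit_params_ok.
case/or3P => [/negP[] // | | ].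
- case/hasP=> i _ /hasP [j _ det_nz].
  exfalso; move/negP: det_nz; apply.
  rewrite -(zC_eq0 C) /det2 rmorphB !rmorphM /= subr_eq0; apply/eqP.
  by apply: (orth_common _ _ ab_nz); rewrite mulrC [_ * b]mulrC; apply: row_orth.
- case/andP=> /hasP [i _ row_nz] /hasP [T T_target sing_T].
  exists T => //; apply: orth_common (row_orth i) _ _.
  + by rewrite -crit_rowE; move/(zsingP C): sing_T => /(_ i o0) ->; rewrite subrr.
  + by move: row_nz; case: (crit_row _ i) => u1 u2; rewrite !(zC_eq0 C) xpair_eqE negb_and.
Qed.
End SingularFibres.

Definition quad := ('I_5 * 'I_5 * 'I_5 * 'I_5)%type.
Definition swap (a b i : 'I_5) : 'I_5 := if i == a then b else if i == b then a else i.
Definition dtransp (q : quad) : {perm 'I_5} := let: (a, b, c, d) := q in (tperm a b * tperm c d)%g.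
Definition dtransp_fun (q : quad) (i : 'I_5) : 'I_5 := let: (a, b, c, d) := q in swap c d (swap a b i).

Lemma tperm_swap (a b i : 'I_5) : tperm a b i = swap a b i.
Proof.
rewrite /swap; case: tpermP => [->|->|/eqP/negbTE -> /eqP/negbTE ->]; rewrite ?eqxx //.
by case: eqP => [->|].
Qed.

Lemma dtranspE q i : dtransp q i = dtransp_fun q i.
Proof. by case: q => [[[a b] c] d]; rewrite permM !tperm_swap. Qed.

(* (a b)(c d) is even when both or neither transpositions are trivial. *)
Definition even_quad (q : quad) : bool := let: (a, b, c, d) := q in (a != b) == (c != d).

Lemma dtransp_even q : even_quad q -> dtransp q \in ('Alt_('I_5))%g.
Proof. by case: q => [[[a b] c] d] /eqP; rewrite Alt_even odd_permM !odd_tperm => ->; rewrite addbb. Qed.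

Definition orbit_pts (p : 'I_5 -> Z) (tab : seq quad) : seq ('I_5 -> Z) :=
  [seq p \o dtransp_fun q | q <- tab].

Definition nodal_certificate (T : Z * Z) (p : 'I_5 -> Z) (tab : seq quad) : bool :=
  [&& T.1 != 0, zsing_point T p, all even_quad tab,
      all (fun s => ~~ zsing T (pattern s) || has (fun y => zprop y (pattern s)) (orbit_pts p tab))
          (words 5)
    & pairwise (fun y z => ~~ zprop y z) (orbit_pts p tab)].

Lemma nodal_certificate_point T p tab : nodal_certificate T p tab -> zsing_point T p.
Proof. by case/and5P. Qed.

Section Nodal.
Variable C : numClosedFieldType.
Implicit Types (x y : 'I_5 -> C).

Lemma Alt_transitive (X : ('I_5 -> C) -> Prop) p :
  (forall x, X x -> exists2 s, s \in ('Alt_('I_5))%g & proportional (fun i => p (s i)) x) ->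
  forall x y, X x -> X y ->
    exists s : {perm 'I_5}, s \in ('Alt_('I_5))%g /\ proportional (fun i => x (s i)) y.
Proof.
move=> orbit x y /orbit [sx sx_alt px] /orbit [sy sy_alt py].
exists (sy * sx^-1)%g; split; first by rewrite groupM ?groupV.
apply: proportional_trans py; apply: proportional_sym.
have -> : (fun i => p (sy i)) = (fun i => p (sx ((sy * sx^-1)%g i))).
  by apply: functional_extensionality => i; rewrite permM permKV.
exact: (proportional_perm (sy * sx^-1)%g px).
Qed.

Lemma nodal_config_of_certificate T p tab :
  nodal_certificate T p tab -> A1_pt (zC C T.1, zC C T.2) (zvec C p) ->
  nodal_config (zC C T.1, zC C T.2) (size tab) (zvec C p).
Proof.
case/and5P=> T1_nz point_p even_tab cover distinct A1_p.
set t := (zC C T.1, zC C T.2); set pts := orbit_pts p tab.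
have a0 : zC C T.1 != 0 by rewrite zC_eq0.
have sing_p : sing_pt t (zvec C p) := zsing_pointP C point_p.
pose q0 : quad := (o0, o0, o0, o0).
pose P (k : 'I_(size tab)) i := zvec C p (dtransp (nth q0 tab k) i).
have PE k : P k = zvec C (nth p pts k).
  by apply: functional_extensionality => i; rewrite /P dtranspE /pts (nth_map q0).
have sing_P k : sing_pt t (P k) := sing_pt_perm _ sing_p.
have orbit x : sing_pt t x -> exists k, proportional (P k) x.
  move=> sing_x; have [s s_word xs] := sing_pt_pattern a0 sing_x.
  have /sing_ptE [nz_s _ /zsingP sing_s] := sing_pt_proportional sing_x (proportional_sym xs).
  move/allP: cover => /(_ s s_word); rewrite sing_s /= => /(has_nthP p) [k k_lt ks].
  rewrite size_map in k_lt; exists (Ordinal k_lt); apply: proportional_trans xs.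
  by rewrite PE; apply: zprop_proportional => //; rewrite -PE; case/sing_ptE: (sing_P (Ordinal k_lt)).
have P_inj k l : proportional (P k) (P l) -> k = l.
  have dist i j : (i < j < size tab)%nat -> ~~ zprop (nth p pts i) (nth p pts j).
    by case/andP=> ij j_lt; apply: (pairwiseP p distinct); rewrite ?inE /= ?size_map // (ltn_trans ij).
  move=> Pkl; apply: val_inj; case: (ltngtP k l) => // kl; exfalso.
  - have := dist k l; rewrite kl ltn_ord => /(_ isT) /negP; apply.
    by apply: (proportional_zprop (C := C)); rewrite -!PE.
  - have := dist l k; rewrite kl ltn_ord => /(_ isT) /negP; apply.
    by apply: (proportional_zprop (C := C)); rewrite -!PE; apply: proportional_sym.
split; first by exists P.
split; first by move=> x /orbit [k Pkx]; apply: A1_pt_proportional Pkx; apply: A1_pt_perm.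
split; last exact: sing_p.
apply: (Alt_transitive (p := zvec C p)) => x /orbit [k Pkx].
exists (dtransp (nth q0 tab k)) => //.
by apply: dtransp_even; apply: (allP even_tab); apply: mem_nth.
Qed.
End Nodal.

Section OrdinaryDoublePoints.
Variable C : numFieldType.
Implicit Types (x w c : 'I_5 -> C) (t : C * C).

(* The linear equations on w expressing that w lies in {s_1 = 0} and is in
   the radical of the Hessian form at x restricted to {s_1 = 0}. *)
Definition radical_eqs t x w (j : 'I_5) : C :=
  if (j : nat) == 0%nat then psum 1 w else hess t x w j - hess t x w o0.

Lemma A1_of_certificate t x c (K : C) (N : 'I_5 -> 'I_5 -> C) :
  sing_pt t x -> K != 0 ->
  (forall w i, K * (w i - dot c w * x i) = dot (N i) (radical_eqs t x w)) -> A1_pt t x.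
Proof.
move=> sing_x K0 cert; split=> // w s1w radical_w.
have const_hess : constant5 (hess t x w).
  by apply/orth_hyperplaneP => v s1v; rewrite -hessbE radical_w.
have eqs0 j : radical_eqs t x w j = 0.
  by rewrite /radical_eqs; case: eqP => _; rewrite ?s1w // (const_hess j o0) subrr.
exists (dot c w) => i; apply/eqP; rewrite -subr_eq0.
have := cert w i; rewrite [dot (N i) _]/dot /sum5 !eqs0 !mulr0 !addr0 => /eqP.
by rewrite mulf_eq0 (negbTE K0).
Qed.

End OrdinaryDoublePoints.

Definition mx5 (R : nzRingType) (rows : seq (seq R)) (i j : 'I_5) : R := nth 0 (nth [::] rows i) j.

(* The four nodal fibres: a singular point and the products of two
   transpositions carrying it to the other singular points. *)
Definition node1 (i : 'I_5) : Z := nth 0%Z [:: 1; -1; 1; -1; 0]%Z i.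
Definition node2 (i : 'I_5) : Z := nth 0%Z [:: 1; -1; 0; 0; 0]%Z i.
Definition node3 (i : 'I_5) : Z := nth 0%Z [:: 2; 2; 2; -3; -3]%Z i.
Definition node4 (i : 'I_5) : Z := nth 0%Z [:: 1; 1; 1; 1; -4]%Z i.

Definition orbit1 : seq quad :=
  [:: (o0, o1, o0, o1); (o0, o1, o0, o2); (o0, o1, o0, o3); (o0, o1, o0, o4); (o0, o1, o1, o4);
      (o0, o1, o2, o4); (o0, o1, o3, o4); (o0, o2, o0, o4); (o0, o2, o1, o4); (o0, o2, o2, o4);
      (o0, o2, o3, o4); (o0, o3, o0, o4); (o0, o3, o1, o4); (o0, o3, o2, o4); (o0, o3, o3, o4)].
Definition orbit2 : seq quad :=
  [:: (o0, o1, o0, o1); (o0, o1, o0, o2); (o0, o1, o0, o3); (o0, o1, o0, o4); (o0, o1, o1, o2);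
      (o0, o1, o1, o3); (o0, o1, o1, o4); (o0, o2, o1, o3); (o0, o2, o1, o4); (o0, o3, o1, o4)].
Definition orbit3 : seq quad :=
  [:: (o0, o1, o0, o1); (o0, o1, o0, o3); (o0, o1, o0, o4); (o0, o1, o1, o3); (o0, o1, o1, o4);
      (o0, o1, o2, o3); (o0, o1, o2, o4); (o0, o3, o1, o4); (o0, o3, o2, o4); (o1, o3, o2, o4)].
Definition orbit4 : seq quad :=
  [:: (o0, o1, o0, o1); (o0, o1, o0, o4); (o0, o1, o1, o4); (o0, o1, o2, o4); (o0, o1, o3, o4)].

Lemma node1_certificate : nodal_certificate (4, -1)%Z node1 orbit1.
Proof. by vm_compute. Qed.
Lemma node2_certificate : nodal_certificate (2, -1)%Z node2 orbit2.
Proof. by vm_compute. Qed.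
Lemma node3_certificate : nodal_certificate (30, -7)%Z node3 orbit3.
Proof. by vm_compute. Qed.
Lemma node4_certificate : nodal_certificate (20, -13)%Z node4 orbit4.
Proof. by vm_compute. Qed.

Ltac A1_certificate := move=> w; apply: ord5P;
  rewrite /radical_eqs /hess /dot /norm2 ?psum5 /sum5 /mx5 /vec5 /=; ring.

Section Nodes.
Variable C : numClosedFieldType.

Lemma node1E : zvec C node1 = vec5 1 (-1) 1 (-1) 0.
Proof. by apply: functional_extensionality; apply: ord5P. Qed.
Lemma node2E : zvec C node2 = vec5 1 (-1) 0 0 0.
Proof. by apply: functional_extensionality; apply: ord5P. Qed.
Lemma node3E : zvec C node3 = vec5 2 2 2 (-3) (-3).
Proof. by apply: functional_extensionality; apply: ord5P. Qed.
Lemma node4E : zvec C node4 = vec5 1 1 1 1 (-4).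
Proof. by apply: functional_extensionality; apply: ord5P. Qed.

Lemma A1_node1 : A1_pt ((4, -1) : C * C) (vec5 1 (-1) 1 (-1) 0).
Proof.
apply: (@A1_of_certificate _ _ _ (vec5 1 0 0 0 0) 32 (mx5 [::
  [:: 0; 0; 0; 0; 0]; [:: 32; 1; -2; 0; 2]; [:: 0; 0; 1; 0; 0];
  [:: 32; -1; -1; 0; 2]; [:: -32; 0; 2; 0; -4]])).
- by rewrite -node1E; exact: (zsing_pointP C (nodal_certificate_point node1_certificate)).
- by rewrite pnatr_eq0.
- A1_certificate.
Qed.

Lemma A1_node2 : A1_pt ((2, -1) : C * C) (vec5 1 (-1) 0 0 0).
Proof.
apply: (@A1_of_certificate _ _ _ (vec5 1 0 0 0 0) 16 (mx5 [::
  [:: 0; 0; 0; 0; 0]; [:: -8; 0; -1; -1; -1]; [:: 8; 0; -1; 1; 1];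
  [:: 8; 0; 1; -1; 1]; [:: 8; 0; 1; 1; -1]])).
- by rewrite -node2E; exact: (zsing_pointP C (nodal_certificate_point node2_certificate)).
- by rewrite pnatr_eq0.
- A1_certificate.
Qed.

Lemma A1_node3 : A1_pt ((30, -7) : C * C) (vec5 2 2 2 (-3) (-3)).
Proof.
apply: (@A1_of_certificate _ _ _ (vec5 (-1) 0 0 (-1) 0) 3600 (mx5 [::
  [:: 2520; -7; -7; 3; 0]; [:: 2520; -1; -7; 3; 0]; [:: 2520; -7; -1; 3; 0];
  [:: -2520; 7; 7; -3; 0]; [:: -1440; 8; 8; -6; 0]])).
- by rewrite -node3E; exact: (zsing_pointP C (nodal_certificate_point node3_certificate)).
- by rewrite pnatr_eq0.
- A1_certificate.
Qed.

Lemma A1_node4 : A1_pt ((20, -13) : C * C) (vec5 1 1 1 1 (-4)).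
Proof.
apply: (@A1_of_certificate _ _ _ (vec5 1 0 0 0 0) 800 (mx5 [::
  [:: 0; 0; 0; 0; 0]; [:: 0; -1; 0; 0; 0]; [:: 0; 0; -1; 0; 0];
  [:: 0; 0; 0; -1; 0]; [:: 800; 1; 1; 1; 0]])).
- by rewrite -node4E; exact: (zsing_pointP C (nodal_certificate_point node4_certificate)).
- by rewrite pnatr_eq0.
- A1_certificate.
Qed.

Lemma nodal_fibre1 : nodal_config (C := C) (4, -1) 15 (vec5 1 (-1) 1 (-1) 0).
Proof. rewrite -node1E; apply: (nodal_config_of_certificate node1_certificate); rewrite node1E; exact: A1_node1. Qed.
Lemma nodal_fibre2 : nodal_config (C := C) (2, -1) 10 (vec5 1 (-1) 0 0 0).
Proof. rewrite -node2E; apply: (nodal_config_of_certificate node2_certificate); rewrite node2E; exact: A1_node2. Qed.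
Lemma nodal_fibre3 : nodal_config (C := C) (30, -7) 10 (vec5 2 2 2 (-3) (-3)).
Proof. rewrite -node3E; apply: (nodal_config_of_certificate node3_certificate); rewrite node3E; exact: A1_node3. Qed.
Lemma nodal_fibre4 : nodal_config (C := C) (20, -13) 5 (vec5 1 1 1 1 (-4)).
Proof. rewrite -node4E; apply: (nodal_config_of_certificate node4_certificate); rewrite node4E; exact: A1_node4. Qed.
End Nodes.

Section Pencil.
Variable C : numFieldType.
Implicit Types (x : 'I_5 -> C).

(* A constant vector in {s_1 = 0} is zero (characteristic 0). *)
Lemma constant_s1_eq0 x : constant5 x -> psum 1 x = 0 -> forall i, x i = 0.
Proof.
move=> const_x s1x i; rewrite (const_x i o0).
have : 5 * x o0 = 0 by rewrite -s1x psum5 /sum5 !expr1 !(const_x _ o0); ring.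
by move/eqP; rewrite mulf_eq0 pnatr_eq0 => /eqP.
Qed.

(* X_(0:1) is the quadric s_1 = s_2 = 0 counted twice: its singular points
   are all the points of that quadric. *)
Lemma double_quadric_sing x : nonzero5 x -> psum 1 x = 0 -> (sing_pt (0, 1) x <-> psum 2 x = 0).
Proof.
have gradE i : grad (0, 1) x i = psum 2 x * x i by rewrite /grad psum2E /= mul0r add0r mul1r.
move=> nz_x s1x; split=> [/sing_ptE [_ _ const_x] | s2x].
- have [// | s2_nz] := eqVneq (psum 2 x) 0; exfalso.
  have const : constant5 x by move=> i j; apply: (mulfI s2_nz); rewrite -!gradE (const_x i j).
  by case: nz_x => i; rewrite (constant_s1_eq0 const s1x i) eqxx.
- by apply/sing_ptE; split=> // i j; rewrite !gradE s2x !mul0r.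
Qed.

Lemma sing_pt_same_P1 t (A B : C) x :
  (A != 0) || (B != 0) -> same_P1 t A B -> sing_pt (A, B) x -> sing_pt t x.
Proof.
case: t => a b AB_nz; rewrite /same_P1 /= => same /sing_ptE [nz_x s1x const_x].
apply/sing_ptE; split=> //.
have form : B * a + - A * b = 0 by rewrite [B * a]mulrC same; ring.
have nz : (B != 0) || (- A != 0) by rewrite oppr_eq0 orbC.
have [r [Da Db]] := kernel_line form nz.
have scale i : grad (a, b) x i = - r * grad (A, B) x i by rewrite /grad Da Db /=; ring.
by move=> i j; rewrite !scale (const_x i j).
Qed.
End Pencil.

Lemma targets_snd : all (fun T : Z * Z => T.2 != 0) targets.
Proof. by []. Qed.

Section Fibres.
Variable C : numClosedFieldType.
Implicit Types (x : 'I_5 -> C) (t : C * C).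

Lemma singular_fibres t :
  ((exists x, sing_pt t x) <->
   (same_P1 t 4 (-1) \/ same_P1 t 2 (-1) \/ same_P1 t 30 (-7) \/
    same_P1 t 20 (-13) \/ same_P1 t 0 1)).
Proof.
case: t => a b; split.
- case=> x sing_x; have [a0 | a_nz] := eqVneq a 0.
    by do 4 right; rewrite /same_P1 /= a0 mul0r mulr0.
  have [T] := sing_pt_params a_nz sing_x.
  rewrite !inE => /orP [/eqP-> | /orP [/eqP-> | /orP [/eqP-> | /orP [/eqP-> | /eqP->]]]] same;
    [left | right; left | do 2 right; left | do 3 right; left | do 4 right]; exact: same.
- have nodal_sing t p n (AB_nz : (t.1 != 0) || (t.2 != 0)) :
      nodal_config t n p -> same_P1 (a, b) t.1 t.2 -> exists x, sing_pt (a, b) x.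
    by case: t AB_nz => A B AB_nz [_ [_ [_ sing_p]]] same; exists p; apply: sing_pt_same_P1 same sing_p.
  case=> [same | [same | [same | [same | same]]]].
  + by apply: (nodal_sing _ _ _ _ (nodal_fibre1 C)); rewrite ?pnatr_eq0.
  + by apply: (nodal_sing _ _ _ _ (nodal_fibre2 C)); rewrite ?pnatr_eq0.
  + by apply: (nodal_sing _ _ _ _ (nodal_fibre3 C)); rewrite ?pnatr_eq0.
  + by apply: (nodal_sing _ _ _ _ (nodal_fibre4 C)); rewrite ?pnatr_eq0.
  + pose q : 'I_5 -> C := vec5 1 'i (-1) (- 'i) 0.
    have s1q : psum 1 q = 0 by rewrite psum5 /sum5 /q /vec5 /=; ring.
    have s2q : psum 2 q = 0.
      by rewrite psum5 /sum5 /q /vec5 /= !sqrrN sqrCi; ring.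
    exists q; apply: (sing_pt_same_P1 (A := 0) (B := 1)) same _; first by rewrite oner_eq0 orbT.
    by apply/double_quadric_sing => //; exists o0; rewrite /q /vec5 /= oner_eq0.
Qed.

Lemma total_space_sing x t : nonzero5 x -> t != (0, 0) ->
  (total_sing_pt x t <-> [/\ same_P1 t 0 1, psum 1 x = 0, psum 2 x = 0 & psum 4 x = 0]).
Proof.
case: t => a b nz_x nz_t; split.
- case=> _ [_ [s1x [_ crit]]].
  have s1_0 : psum 1 (fun _ : 'I_5 => 0 : C) = 0 by rewrite psum5 /sum5 !expr1 !addr0.
  have crit_0 u : u.1 * psum 4 x + u.2 * psum 2 x ^+ 2 = 0.
    by have := crit _ u s1_0; rewrite Gline_coef1 /dot /sum5 !mul0r !add0r mulr0 add0r.
  have s4x : psum 4 x = 0 by have := crit_0 (1, 0); rewrite /= mul1r mul0r addr0.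
  have s2x : psum 2 x = 0.
    by have := crit_0 (0, 1); rewrite /= mul0r add0r mul1r => /eqP; rewrite expf_eq0 => /eqP.
  have const_x : constant5 (grad (a, b) x).
    apply/orth_hyperplaneP => v s1v; have := crit v (0, 0) s1v.
    by rewrite Gline_coef1 /= !mul0r !addr0 => /eqP; rewrite mulf_eq0 pnatr_eq0 => /eqP.
  split=> //; rewrite /same_P1 /= mulr1 mulr0; apply/eqP; apply: contraT => a_nz.
  have sing_a0 : sing_pt (a, 0) x.
    apply/sing_ptE; split=> // i j; move: (const_x i j).
    by rewrite /grad -psum2E s2x /= !(mulr0, mul0r, addr0).
  have [T T_target] := sing_pt_params a_nz sing_a0.
  rewrite mul0r => /eqP; rewrite mulf_eq0 (negbTE a_nz) /= zC_eq0.
  by move/allP: targets_snd => /(_ T T_target) /negbTE ->.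
- rewrite /same_P1 /= mulr1 mulr0 => -[a0 s1x s2x s4x]; do 3 (split=> //).
  split; first by rewrite /Gform /= a0 s2x s4x !(mul0r, mulr0, add0r, expr0n).
  move=> v u _; rewrite Gline_coef1 /dot /grad -psum2E s2x s4x a0 /sum5 /=.
  by rewrite !(mul0r, mulr0, add0r, addr0, expr0n).
Qed.
End Fibres.

Unset Implicit Arguments.
Theorem proposition3p1 (C : numClosedFieldType) :
  (forall t : C * C, t != (0, 0) ->
     ((exists x, sing_pt t x) <->
      (same_P1 t 4 (-1) \/ same_P1 t 2 (-1) \/ same_P1 t 30 (-7) \/
       same_P1 t 20 (-13) \/ same_P1 t 0 1))) /\
  nodal_config (C := C) (4, -1) 15 (vec5 1 (-1) 1 (-1) 0) /\
  nodal_config (C := C) (2, -1) 10 (vec5 1 (-1) 0 0 0) /\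
  nodal_config (C := C) (30, -7) 10 (vec5 2 2 2 (-3) (-3)) /\
  nodal_config (C := C) (20, -13) 5 (vec5 1 1 1 1 (-4)) /\
  (forall (R : comNzRingType) (x : 'I_5 -> R), Gform x (0, 1) = psum 2 x ^+ 2) /\
  (forall x : 'I_5 -> C, nonzero5 x -> psum 1 x = 0 ->
     (sing_pt (C := C) (0, 1) x <-> psum 2 x = 0)) /\
  (forall (x : 'I_5 -> C) (t : C * C), nonzero5 x -> t != (0, 0) ->
     (total_sing_pt x t <->
      [/\ same_P1 t 0 1, psum 1 x = 0, psum 2 x = 0 & psum 4 x = 0])).
Proof.
split; first by move=> t _; exact: singular_fibres.
split; first exact: nodal_fibre1.
split; first exact: nodal_fibre2.
split; first exact: nodal_fibre3.
split; first exact: nodal_fibre4.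
split; first by move=> R x; rewrite /Gform /= mul0r add0r mul1r.
split; first exact: double_quadric_sing.
exact: total_space_sing.
Qed.
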